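(* Let $(M,\Sigma)$ be a measurable space, $r\ge1$, and $\mu_1,\dots,\mu_r$ non-atomic countably additive finite measures on $\Sigma$. Let $(H_k)_{k\ge1}$ be measurable sets and $(h_k)_{k\ge1}$ indices in $\{1,\dots,r\}$ such that for every $k$: $H_k\subseteq M\setminus\bigcup_{i=1}^{k-1}H_i$, $H_k$ has a gentleman's solution (a partition $H_k=F_1\sqcup\dots\sqcup F_r$ with $\mu_i(F_i)\le\mu_i(F_j)$ for all $i,j$), and $\mu_{h_k}(H_k)\ge 2^{-(r-1)}\mu_{h_k}\bigl(M\setminus\bigcup_{i=1}^{k-1}H_i\bigr)$. Let $\ell\in\{1,\dots,r\}$ be an index with $h_k=\ell$ for infinitely many $k$, and let $k_1<k_2<\dots$ be all indices $k$ with $h_k=\ell$. Then for every $n\ge1$, $$\mu_\ell\Bigl(M\setminus\bigsqcup_{i=1}^{k_n}H_i\Bigr)\le\Bigl(\frac{2^{r-1}-1}{2^{r-1}}\Bigr)^{n}\mu_\ell(M).$$ *)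

From HB Require Import structures.
From mathcomp Require Import all_boot all_order all_algebra.
From mathcomp Require Import all_classical all_reals all_analysis.
Set Implicit Arguments. Unset Strict Implicit. Unset Printing Implicit Defensive.
Import Order.TTheory GRing.Theory Num.Theory.
Local Open Scope classical_set_scope.
Local Open Scope ring_scope.
Local Open Scope ereal_scope.

Definition nonatomic d (T : measurableType d) (R : realType)
  (mu : set T -> \bar R) : Prop :=
  forall A, measurable A -> 0 < mu A ->
    exists2 B, measurable B /\ B `<=` A & 0 < mu B /\ mu B < mu A.

Definition gentleman_solution d (T : measurableType d) (R : realType) (r : nat)
  (mu : 'I_r -> set T -> \bar R) (H : set T) : Prop :=
  exists F : 'I_r -> set T,
    [/\ forall i, measurable (F i),
        forall i j, i != j -> F i `&` F j = set0,
        \big[setU/set0]_(i < r) F i = H &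
        forall i j, mu i (F i) <= mu i (F j)].

From HB Require Import structures.
From mathcomp Require Import all_boot all_order all_algebra.
From mathcomp Require Import all_classical all_reals all_analysis.
From mathcomp Require Import ring.
Import Order.TTheory GRing.Theory Num.Theory.
Local Open Scope classical_set_scope.
Local Open Scope ring_scope.
Local Open Scope ereal_scope.

(* Each step k with h_k = l removes at least a fraction 2^-(r-1) of the
   mu_l-mass of what is left, M \ (H_1 u ... u H_(k-1)), so that remaining mass
   is multiplied by at most q = (2^(r-1) - 1) / 2^(r-1).  Since the remaining
   mass never increases, it has shrunk by q^n after the n-th such step. *)

Lemma measureD_le_scale d (T : measurableType d) (R : realType)
    (mu : {measure set T -> \bar R}) (c : R) (A B : set T) :
  measurable A -> measurable B -> B `<=` A -> mu A < +oo ->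
  c%:E * mu A <= mu B -> mu (A `\` B) <= (1 - c)%:E * mu A.
Proof.
move=> mA mB BA muA_lt cAB.
have finA : mu A \is a fin_num by rewrite ge0_fin_numE ?measure_ge0.
by rewrite measureD // (setIidr BA) EFinB muleBl // mul1e leeB.
Qed.

Lemma nonincreasing_seq_contract_subseq {R : realType} {u : nat -> \bar R}
    {q : R} {kk : nat -> nat} :
  (0 <= q)%R -> nonincreasing_seq u -> {homo kk : n m / (n < m)%N} ->
  (forall n, u (kk n).+1 <= q%:E * u (kk n)) ->
  forall n, u (kk n).+1 <= (q ^+ n.+1)%:E * u 0%N.
Proof.
move=> q0 u_noninc kk_incr u_contract; elim=> [|n IH].
  by rewrite expr1 (le_trans (u_contract 0%N)) // lee_wpmul2l ?lee_fin ?u_noninc.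
rewrite (le_trans (u_contract n.+1)) // exprS EFinM -muleA lee_wpmul2l ?lee_fin //.
exact/(le_trans _ IH)/u_noninc/kk_incr.
Qed.

(* Indices are 0-based: H k stands for H_{k+1} and kk n for k_{n+1}, hence the
   exponent n.+1. *)
Theorem lemma11 (d : measure_display) (T : measurableType d) (R : realType)
  (r : nat) (hr : (1 <= r)%N)
  (mu : 'I_r -> {measure set T -> \bar R})
  (mu_fin : forall i, mu i setT < +oo)
  (mu_na : forall i, nonatomic (mu i))
  (H : nat -> set T) (h : nat -> 'I_r)
  (H_meas : forall k, measurable (H k))
  (H_sub : forall k, H k `<=` ~` \big[setU/set0]_(i < k) H i)
  (H_gent : forall k, gentleman_solution (fun i => (mu i : set T -> \bar R)) (H k))
  (H_big : forall k,
     mu (h k) (H k) >=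
       ((2%:R ^+ r.-1)^-1 : R)%:E * mu (h k) (~` \big[setU/set0]_(i < k) H i))
  (l : 'I_r) (kk : nat -> nat)
  (kk_incr : forall n m, (n < m)%N -> (kk n < kk m)%N)
  (kk_all : forall k, h k = l <-> exists n, kk n = k) :
  forall n : nat,
    mu l (~` \big[setU/set0]_(i < (kk n).+1) H i) <=
      ((((2%:R ^+ r.-1) - 1) / 2%:R ^+ r.-1 : R) ^+ n.+1)%:E * mu l setT.
Proof.
set U := fun k => \big[setU/set0]_(i < k) H i.
set p := (2%:R ^+ r.-1 : R)%R.
have p_gt0 : (0 < p)%R by rewrite exprn_gt0.
have rest_meas k : measurable (~` U k).
  by apply/measurableC/bigsetU_measurable => i _.
have rest_fin k : mu l (~` U k) < +oo.
  by rewrite (le_lt_trans _ (mu_fin l)) // le_measure ?inE.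
have rest_step k : h k = l -> mu l (~` U k.+1) <= ((p - 1) / p)%:E * mu l (~` U k).
  move=> hk; rewrite /U big_ord_recr /= -/(U k) setCU -setDE.
  have -> : ((p - 1) / p = 1 - p^-1)%R by field; rewrite gt_eqF.
  apply: measureD_le_scale;
    [exact: rest_meas | exact: H_meas | exact: H_sub | exact: rest_fin |].
  by rewrite -hk; apply: H_big.
have rest_noninc : nonincreasing_seq (fun k => mu l (~` U k)).
  by move=> m k mk; rewrite le_measure ?inE //; apply/subsetC/subset_bigsetU.
have q_ge0 : (0 <= (p - 1) / p)%R.
  by rewrite divr_ge0 ?subr_ge0 ?(ltW p_gt0) // /p exprn_ege1 // ler1n.
have rest_step_kk m :
    mu l (~` U (kk m).+1) <= ((p - 1) / p)%:E * mu l (~` U (kk m)).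
  by apply/rest_step/kk_all; exists m.
move=> n.
have := nonincreasing_seq_contract_subseq q_ge0 rest_noninc kk_incr rest_step_kk n.
by rewrite /U big_ord0 setC0.
Qed.
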